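(* In the setting described in the context, the decoding subgraph of any reliable logical Pauli product has edge degree at most two (every elementary error flips at most two checks of the subgraph) and vertex degree bounded by a constant $O(1)$ (the number of elementary errors flipping any given check of the subgraph is bounded independently of $d$ and of the circuit).
   Context: Setting: logical qubits encoded in distance-$d$ unrotated surface codes, initialized in $|\overline{0}\rangle$, $|\overline{+}\rangle$ (by preparing all physical qubits in $|0\rangle$ resp. $|+\rangle$) or in magic states $|\overline T\rangle$ with reliable ($+1$) stabilizers; logical Clifford gates implemented (fold-)transversally (Pauli and $\overline{\mathrm{CNOT}}$ transversally; $\overline H$ by physical $H$ plus reflection about the lattice diagonal; $\overline S$ by $S$/$S^\dagger$ on diagonal qubits and $CZ$ between qubit pairs related by reflection about the diagonal), each followed by one round of stabilizer measurement (SE); logical $\overline Z$/$\overline X$ measurements by measuring all data qubits in $Z$/$X$. Elementary errors: single-qubit Pauli $X$ and $Z$ errors on data qubits before each SE round and on input magic states, and flips of syndrome measurement outcomes. Reliable logical Pauli product: with $n$ logical qubits and $m$ measurements, a measurement product $\vec v\in\mathbb{Z}_2^m$ is reliable if $M\vec v\in\operatorname{span}B$, where $M\in\mathbb{Z}_2^{2n\times m}$ has entry $(i,j)$ (resp. $(n+i,j)$) equal to $1$ iff the back-propagation of measurement $j$ to initialization has an $\overline X$- (resp. $\overline Z$-) component on qubit $i$, and $B$ contains the unit vectors $\vec e_{x,i}$ (position $i$) and $\vec e_{z,i}$ (position $n+i$) for a $|\overline T\rangle$ qubit $i$, only $\vec e_{z,i}$ for a $|\overline 0\rangle$ qubit,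 only $\vec e_{x,i}$ for a $|\overline +\rangle$ qubit. Checks: each stabilizer measurement at an SE round is multiplied with the measured value(s) of its back-propagation through the preceding gate at the previous SE round (at the first round, a deterministically-$+1$ initial stabilizer is itself a check). Decoding subgraph of $\overline P$: back-propagate $\overline P$ to get $\overline P^t=\overline O_1^t\otimes\cdots\otimes\overline O_n^t$ at each time step $t$; its vertices are the $X$-type checks of qubit $j$ at step $t$ when $\overline O_j^t\in\{\overline X,\overline Y\}$ and the $Z$-type checks when $\overline O_j^t\in\{\overline Z,\overline Y\}$; its (hyper)edges are the elementary errors flipping at least one included check, each connecting the included checks it flips. *)

From HB Require Import structures.
From mathcomp Require Import all_boot all_order all_algebra.
Set Implicit Arguments. Unset Strict Implicit. Unset Printing Implicit Defensive.
Import GRing.Theory.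

Inductive istate := IZero | IPlus | IT.

(* logical gates: Paulis X^x Z^z, H, S, CNOT (control c, target t) *)
Inductive gate (n : nat) :=
| GPauli (i : 'I_n) (x z : bool)
| GH (i : 'I_n)
| GS (i : 'I_n)
| GCNOT (c t : 'I_n).

(* operations of a layer; [OMeas i bx]: logical measurement of qubit i in
   the X basis if bx = true, in the Z basis if bx = false. *)
Inductive op (n : nat) :=
| OInit (i : 'I_n) (s : istate)
| OGate (g : gate n)
| OMeas (i : 'I_n) (bx : bool).

(* A circuit on n logical qubits is a list of layers [L : seq (seq (op n))].
   Layer t is followed by SE round t on all active qubits. *)

Definition supp_gate n (g : gate n) : seq 'I_n :=
  match g with
  | GPauli i _ _ => [:: i] | GH i => [:: i] | GS i => [:: i]
  | GCNOT c t => [:: c; t]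
  end.

Definition supp_op n (o : op n) : seq 'I_n :=
  match o with OInit i _ => [:: i] | OGate g => supp_gate g | OMeas i _ => [:: i] end.

Definition is_init_of n (i : 'I_n) (o : op n) : bool :=
  if o is OInit j _ then j == i else false.
Definition is_meas_of n (i : 'I_n) (o : op n) : bool :=
  if o is OMeas j _ then j == i else false.
Definition touches_gate n (i : 'I_n) (o : op n) : bool :=
  if o is OGate g then i \in supp_gate g else false.

(* layer of initialization / of measurement (size L if never measured) *)
Definition initL n (L : seq (seq (op n))) (i : 'I_n) : nat := find (has (is_init_of i)) L.
Definition measL n (L : seq (seq (op n))) (i : 'I_n) : nat := find (has (is_meas_of i)) L.

Definition active n (L : seq (seq (op n))) (i : 'I_n) (t : nat) : bool :=
  (initL L i <= t) && (t < measL L i).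

Definition layer_ok n (ly : seq (op n)) : bool := uniq (flatten (map (@supp_op n) ly)).

Definition well_formed n (L : seq (seq (op n))) : Prop :=
  all (@layer_ok n) L /\
  forall i : 'I_n,
    count (has (is_init_of i)) L = 1 /\
    count (has (is_meas_of i)) L <= 1 /\
    initL L i < measL L i /\
    (forall t, t < size L -> has (touches_gate i) (nth [::] L t) ->
       initL L i < t < measL L i).

Definition init_of n (i : 'I_n) (o : op n) : option istate :=
  if o is OInit j s then (if j == i then Some s else None) else None.
Definition init_state n (L : seq (seq (op n))) (i : 'I_n) : istate :=
  head IZero (pmap (init_of i) (flatten L)).

(* list of logical measurements (qubit index, X-basis?, layer) *)
Definition meas_of n (o : op n) : option (nat * bool) :=
  if o is OMeas i b then Some (nat_of_ord i, b) else None.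
Definition mlist n (L : seq (seq (op n))) : seq (nat * bool * nat) :=
  flatten [seq [seq (qb.1, qb.2, t) | qb <- pmap (@meas_of n) (nth [::] L t)]
          | t <- iota 0 (size L)].
Definition nmeas n (L : seq (seq (op n))) : nat := size (mlist L).
Definition mnth n (L : seq (seq (op n))) (j : nat) : nat * bool * nat :=
  nth (0, false, 0) (mlist L) j.

(* Logical Paulis (binary symplectic representation, signs ignored)   *)

Definition b2F (b : bool) : 'F_2 := (b%:R)%R.

Record lpauli (n : nat) := LP { lx : 'I_n -> bool ; lz : 'I_n -> bool }.

(* conjugation of a logical Pauli by a logical gate (involutive on the
   symplectic representation, so it serves for back-propagation) *)
Definition lconj n (g : gate n) (P : lpauli n) : lpauli n :=
  match g with
  | GPauli _ _ _ => P
  | GH i => LP (fun j => if j == i then lz P j else lx P j)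
               (fun j => if j == i then lx P j else lz P j)
  | GS i => LP (lx P) (fun j => lz P j (+) ((j == i) && lx P j))
  | GCNOT c t => LP (fun j => lx P j (+) ((j == t) && lx P c))
                    (fun j => lz P j (+) ((j == c) && lz P t))
  end.

Definition layer_lconj n (ly : seq (op n)) (P : lpauli n) : lpauli n :=
  foldr (fun o P => if o is OGate g then lconj g P else P) P ly.

(* back-propagation through layers hi, hi-1, ..., lo (in this order) *)
Definition bp n (L : seq (seq (op n))) (lo hi : nat) (P : lpauli n) : lpauli n :=
  foldl (fun P s => layer_lconj (nth [::] L s) P) P (rev (iota lo (hi.+1 - lo))).

Definition obs n (q : nat) (bx : bool) : lpauli n :=
  if bx then LP (fun i : 'I_n => i == q :> nat) (fun _ => false)
  else LP (fun _ => false) (fun i : 'I_n => i == q :> nat).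

(* the matrix M in Z_2^{2n x m}: entry (i,j) / (n+i,j) is the X- / Z-component
   on qubit i of the back-propagation of measurement j to the initialization
   of qubit i (zero if qubit i is initialized after measurement j). *)
Definition Mmat n (L : seq (seq (op n))) : 'M['F_2]_(n + n, nmeas L) :=
  \matrix_(r, j)
    (let: (q, bx, tj) := mnth L j in
     match split r with
     | inl i => b2F ((initL L i < tj) && lx (bp L (initL L i).+1 tj (obs n q bx)) i)
     | inr i => b2F ((initL L i < tj) && lz (bp L (initL L i).+1 tj (obs n q bx)) i)
     end).

(* is the unit vector at position r in B ? *)
Definition in_B n (L : seq (seq (op n))) (r : 'I_(n + n)) : bool :=
  match split r with
  | inl i => if init_state L i is IZero then false else true
  | inr i => if init_state L i is IPlus then false else true
  end.

(* matrix whose nonzero rows are exactly the vectors of B *)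
Definition Bmat n (L : seq (seq (op n))) : 'M['F_2]_(n + n) :=
  \matrix_(r, c) b2F ((r == c) && in_B L r).

Definition reliable n (L : seq (seq (op n))) (v : 'cV['F_2]_(nmeas L)) : Prop :=
  (trmx (Mmat L *m v) <= Bmat L)%MS.
Arguments reliable {n} L v.

(* back-propagation of the product P-bar of the measurements in v to the
   time of SE round t *)
Definition Pbar n (L : seq (seq (op n))) (v : 'cV['F_2]_(nmeas L)) (t : nat) : lpauli n :=
  LP (fun i => \big[addb/false]_(j < nmeas L | v j ord0 != 0%R)
                 (let: (q, bx, tj) := mnth L j in
                  (t < tj) && lx (bp L t.+1 tj (obs n q bx)) i))
     (fun i => \big[addb/false]_(j < nmeas L | v j ord0 != 0%R)
                 (let: (q, bx, tj) := mnth L j in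
                  (t < tj) && lz (bp L t.+1 tj (obs n q bx)) i)).
Arguments Pbar {n} L v t.

(* positions (r,c) in a (2d-1) x (2d-1) grid: data qubits at r+c even,
   Z-stabilizers at (odd, even), X-stabilizers at (even, odd). *)
Definition pos (d : nat) := ('I_(d.*2.-1) * 'I_(d.*2.-1))%type.

Definition isData d (p : pos d) : bool := ~~ odd (p.1 + p.2).
Definition isZs d (p : pos d) : bool := odd p.1 && ~~ odd p.2.
Definition isXs d (p : pos d) : bool := ~~ odd p.1 && odd p.2.
Definition adj d (p q : pos d) : bool :=
  ((p.1 == q.1 :> nat) && ((p.2.+1 == q.2 :> nat) || (q.2.+1 == p.2 :> nat))) ||
  ((p.2 == q.2 :> nat) && ((p.1.+1 == q.1 :> nat) || (q.1.+1 == p.1 :> nat))).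
Definition refl d (p : pos d) : pos d := (p.2, p.1).

(* physical Pauli on all n code blocks (symplectic, signs ignored) *)
Record ppauli (d n : nat) := PP { px : 'I_n -> pos d -> bool ; pz : 'I_n -> pos d -> bool }.

Definition gen d n (i : 'I_n) (s : pos d) : ppauli d n :=
  PP (fun j q => (j == i) && isXs s && adj s q) (fun j q => (j == i) && isZs s && adj s q).

Definition anticomm d n (E F : ppauli d n) : bool :=
  \big[addb/false]_(j : 'I_n) \big[addb/false]_(q : pos d)
     ((px E j q && pz F j q) (+) (pz E j q && px F j q)).

(* conjugation of physical Paulis by the (fold-)transversal implementation
   of a logical gate *)
Definition pconj d n (g : gate n) (E : ppauli d n) : ppauli d n :=
  match g with
  | GPauli _ _ _ => E
  | GH i => PP (fun j q => if j == i then pz E j (refl q) else px E j q)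
               (fun j q => if j == i then px E j (refl q) else pz E j q)
  | GS i => PP (px E) (fun j q => pz E j q (+) ((j == i) && px E j (refl q)))
  | GCNOT c t => PP (fun j q => px E j q (+) ((j == t) && px E c q))
                    (fun j q => pz E j q (+) ((j == c) && pz E t q))
  end.

Definition layer_pconj d n (ly : seq (op n)) (E : ppauli d n) : ppauli d n :=
  foldr (fun o E => if o is OGate g then pconj g E else E) E ly.

(* forward propagation of a physical Pauli from just before SE round u to
   SE round t (through layers u+1, ..., t) *)
Definition fwd d n (L : seq (seq (op n))) (u t : nat) (E : ppauli d n) : ppauli d n :=
  foldl (fun E s => layer_pconj (nth [::] L s) E) E (iota u.+1 (t - u)).

(* single-qubit X (bx = true) or Z error on data qubit q of block i *)
Definition single d n (i : 'I_n) (q : pos d) (bx : bool) : ppauli d n :=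
  PP (fun j p => bx && (j == i) && (p == q)) (fun j p => ~~ bx && (j == i) && (p == q)).

(* representative of logical X-bar (column 0) / Z-bar (row 0) of block i *)
Definition logrep d n (i : 'I_n) (bx : bool) : ppauli d n :=
  PP (fun j (p : pos d) => bx && (j == i) && (p.2 == 0 :> nat) && ~~ odd p.1)
     (fun j (p : pos d) => ~~ bx && (j == i) && (p.1 == 0 :> nat) && ~~ odd p.2).

(* checks: (round t, logical qubit i, stabilizer site s) *)
Definition chk d n T := ('I_T * 'I_n * pos d)%type.

(* elementary errors:
   inl (inl (t,i,q,bx)) : X (bx) / Z error on data qubit q of block i before SE round t
   inl (inr (t,i,s))    : flip of the outcome of stabilizer s of block i at SE round t
   inr (i,bx)           : X (bx) / Z error on the input magic state i *)
Definition err d n T :=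
  (('I_T * 'I_n * pos d * bool) + ('I_T * 'I_n * pos d) + ('I_n * bool))%type.

Definition is_err d n (L : seq (seq (op n))) (e : err d n (size L)) : bool :=
  match e with
  | inl (inl (t, i, q, _)) => active L i t && isData q
  | inl (inr (t, i, s)) => active L i t && (isXs s || isZs s)
  | inr (i, _) => if init_state L i is IT then true else false
  end.
Arguments is_err {d n} L e.

(* does error e flip the outcome of the measurement of stabilizer s of
   block i at SE round t ? *)
Definition mflip d n (L : seq (seq (op n))) (e : err d n (size L))
    (me : nat * 'I_n * pos d) : bool :=
  let: (t, i, s) := me in
  match e with
  | inl (inl (u, i', q, bx)) =>
      (u <= t) && anticomm (fwd L u t (single i' q bx)) (gen i s)
  | inl (inr (u, i', s')) => (u == t :> nat) && (i' == i) && (s' == s)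
  | inr (i', bx) =>
      (initL L i' <= t) && anticomm (fwd L (initL L i') t (logrep d i' bx)) (gen i s)
  end.
Arguments mflip {d n} L e me.

Definition gate_of n (o : op n) : option (gate n) := if o is OGate g then Some g else None.

(* generators (at the previous SE round) whose product is the back-propagation
   of the stabilizer generator (i,s) through the layer ly *)
Definition bpgen d n (ly : seq (op n)) (i : 'I_n) (s : pos d) : seq ('I_n * pos d) :=
  match head None [seq Some g | g <- pmap (@gate_of n) ly & i \in supp_gate g] with
  | Some (GH _) => [:: (i, refl s)]
  | Some (GS _) => if isXs s then [:: (i, s); (i, refl s)] else [:: (i, s)]
  | Some (GCNOT c tg) =>
      if ((i == tg) && isZs s) || ((i == c) && isXs s) then [:: (c, s); (tg, s)]
      else [:: (i, s)]
  | _ => [:: (i, s)]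
  end.

Definition deterministic d (st : istate) (s : pos d) : bool :=
  match st with IZero => isZs s | IPlus => isXs s | IT => true end.

Definition is_check d n (L : seq (seq (op n))) (c : chk d n (size L)) : bool :=
  let: (t, i, s) := c in
  active L i t && (isXs s || isZs s) &&
  ((t == initL L i :> nat) ==> deterministic (init_state L i) s).
Arguments is_check {d n} L c.

(* the measurements whose product is the check *)
Definition check_meas d n (L : seq (seq (op n))) (c : chk d n (size L))
    : seq (nat * 'I_n * pos d) :=
  let: (t, i, s) := c in
  (nat_of_ord t, i, s) ::
  (if t == initL L i :> nat then [::]
   else [seq (t.-1, ij.1, ij.2) | ij <- bpgen (nth [::] L t) i s]).
Arguments check_meas {d n} L c.

Definition flips d n (L : seq (seq (op n))) (e : err d n (size L)) (c : chk d n (size L)) : bool :=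
  foldr (fun me b => mflip L e me (+) b) false (check_meas L c).
Arguments flips {d n} L e c.

(* vertices of the decoding subgraph of the product of the measurements in v *)
Definition included d n (L : seq (seq (op n))) (v : 'cV['F_2]_(nmeas L))
    (c : chk d n (size L)) : bool :=
  is_check L c &&
  (let: (t, i, s) := c in
   if isXs s then lx (Pbar L v t) i else lz (Pbar L v t) i).
Arguments included {d n} L v c.

From mathcomp Require Import all_boot all_order all_algebra.
From mathcomp Require Import zify.
Set Implicit Arguments. Unset Strict Implicit. Unset Printing Implicit Defensive.

(* A check compares a stabilizer measured at round t with its back-propagation
   [bpgen] through layer t, measured at round t-1.  Dually, a Pauli error
   forward-propagated through layer t anticommutes with a round-t generator
   iff it anticommutes with an odd number of generators of its
   back-propagation, so the two halves of every later check cancel: an error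
   is seen only by checks of the round in which it occurs.  A data-qubit error
   is thus seen by the at most two adjacent stabilizers of the right type (one
   on each side of the qubit), an error on an input magic state (a logical
   operator) by none.  A flipped outcome of stabilizer s at round u is seen by
   the check of s at round u and by the round-(u+1) checks whose
   back-propagation contains s, i.e. by the forward image [fwdgen_of] of s,
   which has at most two elements; when it has two, the back-propagated
   observable satisfies P_u(s) = P_(u+1)(s1) + P_(u+1)(s2), so the three
   checks cannot all be vertices of the decoding subgraph.  Conversely a check
   is flipped only by data errors on the four neighbours of its stabilizer and
   by flips of the at most three outcomes it multiplies. *)

Definition gate_at n (ly : seq (op n)) (k : 'I_n) : option (gate n) :=
  head None [seq Some g | g <- pmap (@gate_of n) ly & k \in supp_gate g].

Definition layer_supp n (ly : seq (op n)) : seq 'I_n := flatten (map (@supp_op n) ly).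

Lemma layer_ok_cons n (o : op n) ly :
  layer_ok (o :: ly) =
  [&& uniq (supp_op o), ~~ has (mem (supp_op o)) (layer_supp ly) & layer_ok ly].
Proof. by rewrite /layer_ok /= cat_uniq. Qed.

Lemma gate_at_cons n (o : op n) ly (k : 'I_n) :
  gate_at (o :: ly) k =
  if o is OGate g then (if k \in supp_gate g then Some g else gate_at ly k)
  else gate_at ly k.
Proof. by case: o => //= g; rewrite /gate_at /=; case: (k \in supp_gate g). Qed.

Lemma gate_at_supp n (ly : seq (op n)) (k : 'I_n) g :
  gate_at ly k = Some g -> k \in supp_gate g /\ {subset supp_gate g <= layer_supp ly}.
Proof.
elim: ly => //= o ly IH; rewrite gate_at_cons.
have in_tail : {subset layer_supp ly <= layer_supp (o :: ly)}.
  by move=> x xly; rewrite mem_cat xly orbT.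
case: o in_tail => [i s|g0|i b] in_tail; try by move/IH=> [kg gly]; split=> // x /gly /in_tail.
case: ifP => [kg0 [<-]|_ /IH [kg gly]]; split=> //= x; last by move/gly/in_tail.
by rewrite mem_cat => ->.
Qed.

Lemma gate_at_None n (ly : seq (op n)) (k : 'I_n) : k \notin layer_supp ly -> gate_at ly k = None.
Proof.
case gk: (gate_at ly k) => [g|] // /negP[].
by have [kg /(_ k kg)] := gate_at_supp gk.
Qed.

Lemma gate_at_shared n (ly : seq (op n)) (j k : 'I_n) g :
  layer_ok ly -> gate_at ly j = Some g -> k \in supp_gate g -> gate_at ly k = Some g.
Proof.
elim: ly => //= o ly IH; rewrite layer_ok_cons => /and3P [_ disj okly].
rewrite !gate_at_cons; case: o disj => [i s|g0|i b] /= disj; try exact: IH.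
case: ifP => [_ [<-] -> //|_ gj kg].
have [_ /(_ k kg) kly] := gate_at_supp gj.
have -> : (k \in supp_gate g0) = false by apply: contraNF disj => kg0; apply/hasP; exists k.
exact: IH.
Qed.

Lemma uniq_supp_gate_at n (ly : seq (op n)) (k : 'I_n) g :
  layer_ok ly -> gate_at ly k = Some g -> uniq (supp_gate g).
Proof.
elim: ly => //= o ly IH; rewrite layer_ok_cons gate_at_cons => /and3P [uo _ okly].
case: o uo => [i s|g0|i b] /= uo; try exact: IH.
by case: ifP => _; [case=> <- | exact: IH].
Qed.

Lemma gate_at_unmeasured n (ly : seq (op n)) (k : 'I_n) g :
  layer_ok ly -> gate_at ly k = Some g -> ~~ has (is_meas_of k) ly.
Proof.
have meas_supp (l : seq (op n)) : has (is_meas_of k) l -> k \in layer_supp l.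
  elim: l => //= o l IH; rewrite mem_cat => /orP [|/IH ->]; last by rewrite orbT.
  by case: o => //= i b /eqP ->; rewrite inE eqxx.
elim: ly => //= o ly IH; rewrite layer_ok_cons gate_at_cons => /and3P [_ disj okly].
case: o disj => [i s|g0|i b] /= disj gk.
- exact: IH.
- move: gk; case: ifP => [kg0 _|_ gk]; last exact: IH.
  by apply: contra disj => /meas_supp kly; apply/hasP; exists k.
- rewrite (negbTE (IH okly gk)) orbF; apply/eqP => ik.
  have [kg /(_ k kg) kly] := gate_at_supp gk.
  by apply: (negP disj); apply/hasP; exists k => //; rewrite ik; apply: mem_head.
Qed.

Section LayerAction.

Variables (n : nat) (T : Type) (act : gate n -> T -> T) (agree : 'I_n -> T -> T -> Prop).
Hypothesis agree_refl : forall k x, agree k x x.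
Hypothesis agree_trans : forall k x y z, agree k x y -> agree k y z -> agree k x z.
Hypothesis act_out : forall g k x, k \notin supp_gate g -> agree k (act g x) x.
Hypothesis act_local : forall g k x y, k \in supp_gate g ->
  {in supp_gate g, forall j, agree j x y} -> agree k (act g x) (act g y).

Definition layer_act (ly : seq (op n)) (x : T) : T :=
  foldr (fun o x => if o is OGate g then act g x else x) x ly.

Definition opt_act (og : option (gate n)) (x : T) : T := if og is Some g then act g x else x.

Lemma layer_act_at ly x (k : 'I_n) :
  layer_ok ly -> agree k (layer_act ly x) (opt_act (gate_at ly k) x).
Proof.
elim: ly k => [|o ly IH] k; first by rewrite /= => _; apply: agree_refl.
rewrite layer_ok_cons gate_at_cons => /and3P [_ disj okly].
case: o disj => [i s|g|i b] /= disj; try exact: IH.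
case: ifP => kg /=; last exact: agree_trans (act_out _ (negbT kg)) (IH k okly).
apply: act_local => // j jg; have := IH j okly.
by rewrite gate_at_None //; apply: contra disj => jly; apply/hasP; exists j.
Qed.

Lemma layer_act_untouched ly x (k : 'I_n) :
  ~~ has (touches_gate k) ly -> agree k (layer_act ly x) x.
Proof.
elim: ly => [|o ly IH] /=; first by move=> _; apply: agree_refl.
rewrite negb_or => /andP [ko kly].
case: o ko => [i s|g|i b] /= ko; try exact: IH.
exact: agree_trans (act_out _ ko) (IH kly).
Qed.

End LayerAction.

Definition agree_blk d n (k : 'I_n) (E F : ppauli d n) : Prop :=
  forall q, px E k q = px F k q /\ pz E k q = pz F k q.

Lemma agree_blk_refl d n k (E : ppauli d n) : agree_blk k E E.
Proof. by []. Qed.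

Lemma agree_blk_trans d n k (E F G : ppauli d n) :
  agree_blk k E F -> agree_blk k F G -> agree_blk k E G.
Proof. by move=> EF FG q; case: (EF q) => -> ->; apply: FG. Qed.

Lemma pconj_out d n (g : gate n) (k : 'I_n) (E : ppauli d n) :
  k \notin supp_gate g -> agree_blk k (pconj g E) E.
Proof.
case: g => [i x z|i|i|c t] /=; rewrite ?inE ?negb_or //.
- by move=> /negbTE ki q /=; rewrite ki.
- by move=> /negbTE ki q /=; rewrite ki addbF.
- by move=> /andP [/negbTE kc /negbTE kt] q /=; rewrite kc kt !addbF.
Qed.

Lemma pconj_local d n (g : gate n) (k : 'I_n) (E F : ppauli d n) :
  k \in supp_gate g -> {in supp_gate g, forall j, agree_blk j E F} ->
  agree_blk k (pconj g E) (pconj g F).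
Proof.
case: g => [i x z|i|i|c t] /=.
- by rewrite inE => /eqP -> EF; apply: EF; rewrite inE.
- rewrite inE => /eqP -> EF q /=; rewrite eqxx.
  by have [-> ->] := EF i (mem_head _ _) (refl q).
- rewrite inE => /eqP -> EF q /=; rewrite eqxx.
  by have [-> ->] := EF i (mem_head _ _) q; have [-> _] := EF i (mem_head _ _) (refl q).
- move=> kct EF q /=.
  have [c1 c2] := EF c (mem_head _ _) q; have [t1 t2] := EF t (mem_last c [:: t]) q.
  by have [k1 k2] := EF k kct q; rewrite c1 t2 k1 k2.
Qed.

Lemma layer_pconj_at d n (ly : seq (op n)) (E : ppauli d n) (k : 'I_n) :
  layer_ok ly -> agree_blk k (layer_pconj ly E) (opt_act (@pconj d n) (gate_at ly k) E).
Proof.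
exact: (layer_act_at (@agree_blk_refl d n) (@agree_blk_trans d n) (@pconj_out d n)
  (@pconj_local d n) E k).
Qed.

Lemma layer_pconj_untouched d n (ly : seq (op n)) (E : ppauli d n) (k : 'I_n) :
  ~~ has (touches_gate k) ly -> agree_blk k (layer_pconj ly E) E.
Proof.
exact: (layer_act_untouched (@agree_blk_refl d n) (@agree_blk_trans d n)
  (@pconj_out d n) E).
Qed.

Definition agree_qubit n (k : 'I_n) (P Q : lpauli n) : Prop :=
  lx P k = lx Q k /\ lz P k = lz Q k.

Lemma lconj_out n (g : gate n) (k : 'I_n) (P : lpauli n) :
  k \notin supp_gate g -> agree_qubit k (lconj g P) P.
Proof.
rewrite /agree_qubit; case: g => [i x z|i|i|c t] /=; rewrite ?inE ?negb_or //.
- by move=> /negbTE ki; rewrite ki.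
- by move=> /negbTE ki; rewrite ki addbF.
- by move=> /andP [/negbTE kc /negbTE kt]; rewrite kc kt !addbF.
Qed.

Lemma lconj_local n (g : gate n) (k : 'I_n) (P Q : lpauli n) :
  k \in supp_gate g -> {in supp_gate g, forall j, agree_qubit j P Q} ->
  agree_qubit k (lconj g P) (lconj g Q).
Proof.
rewrite /agree_qubit; case: g => [i x z|i|i|c t] /=.
- by rewrite inE => /eqP -> PQ; apply: PQ; rewrite inE.
- by rewrite inE => /eqP -> PQ; rewrite eqxx; have [-> ->] := PQ i (mem_head _ _).
- by rewrite inE => /eqP -> PQ; rewrite eqxx; have [-> ->] := PQ i (mem_head _ _).
- move=> kct PQ; have [c1 c2] := PQ c (mem_head _ _).
  have [t1 t2] := PQ t (mem_last c [:: t]); have [k1 k2] := PQ k kct.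
  by rewrite c1 t2 k1 k2.
Qed.

Lemma layer_lconj_at n (ly : seq (op n)) (P : lpauli n) (k : 'I_n) :
  layer_ok ly -> agree_qubit k (layer_lconj ly P) (opt_act (@lconj n) (gate_at ly k) P).
Proof.
apply: (layer_act_at _ _ (@lconj_out n) (@lconj_local n)) => [//|j R1 R2 R3 [e1 e2]].
by rewrite /agree_qubit e1 e2.
Qed.

Definition comp n (bx : bool) (k : 'I_n) (P : lpauli n) : bool := if bx then lx P k else lz P k.

Lemma comp_agree n (k : 'I_n) (P Q : lpauli n) bx : agree_qubit k P Q -> comp bx k P = comp bx k Q.
Proof. by case: bx => -[]. Qed.

Lemma refl_inv d : involutive (@refl d). Proof. by case. Qed.

Lemma refl_inj d : injective (@refl d). Proof. exact: inv_inj (@refl_inv d). Qed.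

Lemma isZs_refl d (s : pos d) : isZs (refl s) = isXs s.
Proof. by rewrite /isZs /isXs andbC. Qed.

Lemma isXs_refl d (s : pos d) : isXs (refl s) = isZs s.
Proof. by rewrite /isZs /isXs andbC. Qed.

Lemma adj_refl d (s q : pos d) : adj (refl s) (refl q) = adj s q.
Proof. by rewrite /adj orbC. Qed.

Lemma isXs_isZs d (s : pos d) : isXs s -> isZs s = false.
Proof. by rewrite /isXs /isZs => /andP [/negbTE -> _]. Qed.

Definition xsyn d (ex : pos d -> bool) (s : pos d) : bool :=
  \big[addb/false]_q (ex q && (isZs s && adj s q)).

Definition zsyn d (ez : pos d -> bool) (s : pos d) : bool :=
  \big[addb/false]_q (ez q && (isXs s && adj s q)).

Lemma anticomm_gen d n (E : ppauli d n) i s :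
  anticomm E (gen i s) = xsyn (px E i) s (+) zsyn (pz E i) s.
Proof.
rewrite /anticomm (bigD1 i) //= [X in _ (+) X]big1 => [|j /negbTE ji]; last first.
  by apply: big1 => q _ /=; rewrite ji /= !andbF.
by rewrite addbF -big_split; apply: eq_bigr => q _ /=; rewrite eqxx.
Qed.

Lemma anticomm_gen_agree d n (E F : ppauli d n) i s :
  agree_blk i E F -> anticomm E (gen i s) = anticomm F (gen i s).
Proof.
move=> EF; rewrite !anticomm_gen /xsyn /zsyn.
by congr (_ (+) _); apply: eq_bigr => q _; case: (EF q) => xq zq; rewrite ?xq ?zq.
Qed.

Definition pauli0 d n : ppauli d n := PP (fun _ _ => false) (fun _ _ => false).

Lemma anticomm0_gen d n (i : 'I_n) (s : pos d) : anticomm (pauli0 d n) (gen i s) = false.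
Proof. by rewrite anticomm_gen /xsyn /zsyn !big1. Qed.

Lemma xsynD d (a b : pos d -> bool) s : xsyn (fun q => a q (+) b q) s = xsyn a s (+) xsyn b s.
Proof. by rewrite /xsyn -big_split; apply: eq_bigr => q _; rewrite andb_addl. Qed.

Lemma zsynD d (a b : pos d -> bool) s : zsyn (fun q => a q (+) b q) s = zsyn a s (+) zsyn b s.
Proof. by rewrite /zsyn -big_split; apply: eq_bigr => q _; rewrite andb_addl. Qed.

Lemma xsyn_refl d (ex : pos d -> bool) s : xsyn (fun q => ex (refl q)) s = zsyn ex (refl s).
Proof.
rewrite /xsyn /zsyn (reindex_inj (@refl_inj d)); apply: eq_bigr => q _.
by rewrite refl_inv isXs_refl -adj_refl refl_inv.
Qed.

Lemma zsyn_refl d (ez : pos d -> bool) s : zsyn (fun q => ez (refl q)) s = xsyn ez (refl s).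
Proof.
rewrite /xsyn /zsyn (reindex_inj (@refl_inj d)); apply: eq_bigr => q _.
by rewrite refl_inv isZs_refl -adj_refl refl_inv.
Qed.

Lemma xsyn0 d (s : pos d) : xsyn (fun _ => false) s = false.
Proof. exact: big1. Qed.

Lemma zsyn0 d (s : pos d) : zsyn (fun _ => false) s = false.
Proof. exact: big1. Qed.

Lemma xsyn_nZ d (ex : pos d -> bool) s : isZs s = false -> xsyn ex s = false.
Proof. by move=> sZ; apply: big1 => q _; rewrite sZ andbF. Qed.

Lemma zsyn_nX d (ez : pos d -> bool) s : isXs s = false -> zsyn ez s = false.
Proof. by move=> sX; apply: big1 => q _; rewrite sX andbF. Qed.

Definition bpgen_of d n (og : option (gate n)) (i : 'I_n) (s : pos d) : seq ('I_n * pos d) :=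
  match og with
  | Some (GH _) => [:: (i, refl s)]
  | Some (GS _) => if isXs s then [:: (i, s); (i, refl s)] else [:: (i, s)]
  | Some (GCNOT c tg) =>
      if ((i == tg) && isZs s) || ((i == c) && isXs s) then [:: (c, s); (tg, s)]
      else [:: (i, s)]
  | _ => [:: (i, s)]
  end.

Lemma bpgenE d n (ly : seq (op n)) i (s : pos d) : bpgen ly i s = bpgen_of (gate_at ly i) i s.
Proof. by []. Qed.

Lemma anticomm_pconj_gen d n (g : gate n) (E : ppauli d n) i s :
  i \in supp_gate g -> uniq (supp_gate g) ->
  anticomm (pconj g E) (gen i s) =
  \big[addb/false]_(js <- bpgen_of (Some g) i s) anticomm E (gen js.1 js.2).
Proof.
rewrite anticomm_gen (eq_bigr _ (fun js _ => anticomm_gen E js.1 js.2)).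
case: g => [i0 x z|i0|i0|c t] /=.
- by rewrite inE => /eqP -> _; rewrite big_seq1.
- by rewrite inE => /eqP -> _; rewrite big_seq1 eqxx xsyn_refl zsyn_refl addbC.
- rewrite inE => /eqP -> _; rewrite eqxx zsynD zsyn_refl.
  case: ifP => sX; rewrite !big_cons big_nil /= addbF.
    by rewrite (@zsyn_nX _ _ (refl s)) ?isXs_refl ?isXs_isZs // addbF addbA.
  by rewrite (@xsyn_nZ _ _ (refl s)) ?isZs_refl // addbF.
- rewrite andbT !inE => ict ct; have tc : (t == c) = false by rewrite eq_sym (negbTE ct).
  case/orP: ict => /eqP ->; rewrite eqxx ?tc ?(negbTE ct) /=.
  + rewrite xsynD xsyn0 addbF zsynD.
    case: (boolP (isXs s)) => sX; rewrite !big_cons big_nil ?big_seq1 /= ?addbF.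
      by rewrite (@xsyn_nZ _ (px E t)) ?isXs_isZs // addFb addbA.
    by rewrite (@zsyn_nX _ (pz E t)) ?(negbTE sX) ?addbF.
  + rewrite xsynD zsynD zsyn0 addbF orbF.
    case: (boolP (isZs s)) => sZ; rewrite !big_cons big_nil ?big_seq1 /= ?addbF.
      have sX : isXs s = false by apply: contraTF sZ => /isXs_isZs ->.
      by rewrite (@zsyn_nX _ (pz E c)) // addbF [_ (+) xsyn _ _]addbC -addbA.
    by rewrite (@xsyn_nZ _ (px E c)) ?(negbTE sZ) ?addbF.
Qed.

Lemma anticomm_layer_pconj d n (ly : seq (op n)) (E : ppauli d n) i s :
  layer_ok ly ->
  anticomm (layer_pconj ly E) (gen i s) =
  \big[addb/false]_(js <- bpgen ly i s) anticomm E (gen js.1 js.2).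
Proof.
move=> okly; rewrite (anticomm_gen_agree _ (layer_pconj_at E i okly)) bpgenE.
case gi: (gate_at ly i) => [g|] /=; last by rewrite big_seq1.
have [ig _] := gate_at_supp gi.
exact: anticomm_pconj_gen ig (uniq_supp_gate_at okly gi).
Qed.

Lemma wf_layer n (L : seq (seq (op n))) t :
  well_formed L -> t < size L -> layer_ok (nth [::] L t).
Proof. by case=> okL _; apply: (all_nthP [::] okL). Qed.

Lemma untouched_until_init n (L : seq (seq (op n))) (k : 'I_n) t :
  well_formed L -> t <= initL L k -> ~~ has (touches_gate k) (nth [::] L t).
Proof.
case=> _ /(_ k) [_ [_ [_ touch]]] tk; case: (ltnP t (size L)) => tL.
  by apply/negP => /(touch _ tL); lia.
by rewrite nth_default.
Qed.

Lemma fwd_id d n (L : seq (seq (op n))) u (E : ppauli d n) : fwd L u u E = E.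
Proof. by rewrite /fwd subnn. Qed.

Lemma fwd_S d n (L : seq (seq (op n))) u t (E : ppauli d n) :
  u <= t -> fwd L u t.+1 E = layer_pconj (nth [::] L t.+1) (fwd L u t E).
Proof.
move=> ut; rewrite /fwd (_ : t.+1 - u = (t - u) + 1); last by lia.
by rewrite iotaD foldl_cat /= (_ : u.+1 + (t - u) = t.+1) //; lia.
Qed.

Lemma fwd_untouched d n (L : seq (seq (op n))) u t (E : ppauli d n) (k : 'I_n) :
  (forall t', u < t' <= t -> ~~ has (touches_gate k) (nth [::] L t')) ->
  agree_blk k (fwd L u t E) E.
Proof.
move=> untouched; rewrite /fwd.
have : {in iota u.+1 (t - u), forall t', ~~ has (touches_gate k) (nth [::] L t')}.
  by move=> t'; rewrite mem_iota => t'_in; apply: untouched; lia.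
elim: (iota _ _) E => [|t' l IH] E /= untouched_l; first exact: agree_blk_refl.
apply: agree_blk_trans (IH _ _) (layer_pconj_untouched _ (untouched_l t' (mem_head _ _))).
by move=> x xl; apply: untouched_l; rewrite inE xl orbT.
Qed.

Lemma flipsE d n (L : seq (seq (op n))) (e : err d n (size L)) c :
  flips L e c = \big[addb/false]_(me <- check_meas L c) mflip L e me.
Proof.
by rewrite /flips; elim: (check_meas L c) => [|me l IH]; rewrite ?big_nil ?big_cons //= IH.
Qed.

Section InsertedError.

Variables (d n : nat) (L : seq (seq (op n))).
Hypothesis wfL : well_formed L.
Variables (e : err d n (size L)) (u : nat) (i0 : 'I_n) (E : ppauli d n).
(* The error [e] acts as the Pauli [E], supported on block [i0], inserted before SE round [u]. *)
Hypothesis mflip_e :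
  forall t j s, mflip L e (t, j, s) = (u <= t) && anticomm (fwd L u t E) (gen j s).
Hypothesis E_on_i0 : forall k : 'I_n, k != i0 -> agree_blk k E (pauli0 d n).
Hypothesis init_le_u : initL L i0 <= u.

Lemma mflip_at_init i s : mflip L e (initL L i, i, s) = (u == initL L i) && anticomm E (gen i s).
Proof.
rewrite mflip_e; case: ltngtP => [u_lt|//|<-]; last by rewrite fwd_id.
have i_i0 : i != i0 by apply: contraTneq u_lt => ->; rewrite -leqNgt.
have untouched : agree_blk i (fwd L u (initL L i) E) E.
  by apply: fwd_untouched => t' /andP [_]; apply: untouched_until_init.
by rewrite (anticomm_gen_agree _ untouched) (anticomm_gen_agree _ (E_on_i0 i_i0)) anticomm0_gen.
Qed.

Lemma mflip_step t i s :
  t.+1 < size L ->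
  mflip L e (t.+1, i, s) (+)
  \big[addb/false]_(js <- bpgen (nth [::] L t.+1) i s) mflip L e (t, js.1, js.2) =
  (u == t.+1) && anticomm E (gen i s).
Proof.
move=> tL; rewrite mflip_e (eq_bigr _ (fun js _ => mflip_e _ _ _)).
case: ltngtP => [u_le|u_gt|->].
- rewrite ltnS in u_le; rewrite u_le fwd_S // anticomm_layer_pconj ?addbb //.
  exact: wf_layer.
- by rewrite big1 // => js _; have -> : u <= t = false by lia.
- by rewrite big1 ?fwd_id ?addbF // => js _; rewrite ltnn.
Qed.

Lemma flips_inserted (t : 'I_(size L)) i s :
  initL L i <= t -> flips L e (t, i, s) = (u == t) && anticomm E (gen i s).
Proof.
move=> it; rewrite flipsE [check_meas _ _]/= big_cons.
case: eqP => [->|t_init]; first by rewrite big_nil addbF mflip_at_init.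
have [t0 t0E] : exists t0, nat_of_ord t = t0.+1 by exists t.-1; lia.
by rewrite big_map t0E mflip_step // -t0E.
Qed.

End InsertedError.

Definition detects d (bx : bool) (s : pos d) : bool := if bx then isZs s else isXs s.

Lemma big_addb_pred1 (T : finType) (a : T) (F : T -> bool) :
  \big[addb/false]_(p : T) ((p == a) && F p) = F a.
Proof. by rewrite (bigD1 a) //= eqxx big1 ?addbF // => p /negbTE ->. Qed.

Lemma xsyn_pt d (b : bool) (q s : pos d) :
  xsyn (fun p => b && (p == q)) s = b && (isZs s && adj s q).
Proof.
rewrite /xsyn -(big_addb_pred1 q (fun p => b && (isZs s && adj s p))).
by apply: eq_bigr => p _; case: (p == q); rewrite ?andbT ?andbF.
Qed.

Lemma zsyn_pt d (b : bool) (q s : pos d) :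
  zsyn (fun p => b && (p == q)) s = b && (isXs s && adj s q).
Proof.
rewrite /zsyn -(big_addb_pred1 q (fun p => b && (isXs s && adj s p))).
by apply: eq_bigr => p _; case: (p == q); rewrite ?andbT ?andbF.
Qed.

Lemma anticomm_single d n (i' : 'I_n) (q : pos d) bx i s :
  anticomm (single i' q bx) (gen i s) = [&& i == i', detects bx s & adj s q].
Proof.
by rewrite anticomm_gen /= xsyn_pt zsyn_pt /detects; case: bx; case: (i == i'); rewrite ?addbF.
Qed.

Lemma xsyn_column d b (s : pos d) :
  xsyn (fun p : pos d => b && (p.2 == 0 :> nat) && ~~ odd p.1) s = false.
Proof.
case: b; last exact: big1.
case sZ: (isZs s); last exact: xsyn_nZ.
case: s sZ => s1 s2; rewrite /isZs /= => /andP [s1_odd s2_even].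
have [s2_0|s2_pos] := posnP s2; last first.
  by apply: big1 => -[p1 p2] _; rewrite /adj /=; lia.
have s1_lt := ltn_ord s1.
have lo : s1.-1 < d.*2.-1 by lia.
have hi : s1.+1 < d.*2.-1 by lia.
have z : 0 < d.*2.-1 by lia.
have one (a : pos d) : \big[addb/false]_p (p == a) = true.
  by rewrite -[RHS](big_addb_pred1 a xpredT); apply: eq_bigr => p _; rewrite andbT.
pose a : pos d := (Ordinal lo, Ordinal z); pose b : pos d := (Ordinal hi, Ordinal z).
rewrite /xsyn (eq_bigr (fun p => (p == a) (+) (p == b))).
  by rewrite big_split /= !one.
by move=> -[p1 p2] _; rewrite !xpair_eqE -!val_eqE /adj /isZs /=; lia.
Qed.

Lemma anticomm_logrep d n (i' : 'I_n) bx i (s : pos d) :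
  anticomm (logrep d i' bx) (gen i s) = false.
Proof.
rewrite anticomm_gen; case: bx => /=; first by rewrite zsyn0 xsyn_column.
rewrite xsyn0; set b := i == i'.
exact: etrans (zsyn_refl (fun p : pos d => b && (p.2 == 0 :> nat) && ~~ odd p.1) s)
  (xsyn_column b (refl s)).
Qed.

Lemma flips_data d n (L : seq (seq (op n))) (u : 'I_(size L)) (i' : 'I_n) (q : pos d) bx
    (t : 'I_(size L)) i s :
  well_formed L -> active L i' u -> initL L i <= t ->
  flips L (inl (inl (u, i', q, bx))) (t, i, s) =
  [&& u == t :> nat, i == i', detects bx s & adj s q].
Proof.
move=> wfL /andP [init_u _] it.
rewrite (flips_inserted (e := inl (inl (u, i', q, bx))) (u := u) (i0 := i') (E := single i' q bx)
  wfL (fun _ _ _ => erefl) _ init_u s it).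
  by rewrite anticomm_single.
by move=> k /negbTE ki p; rewrite /= ki !andbF.
Qed.

Lemma flips_magic d n (L : seq (seq (op n))) (i' : 'I_n) bx (t : 'I_(size L)) i (s : pos d) :
  well_formed L -> initL L i <= t -> flips L (inr (i', bx)) (t, i, s) = false.
Proof.
move=> wfL it.
rewrite (flips_inserted (e := inr (i', bx)) (u := initL L i') (i0 := i') (E := logrep d i' bx)
  wfL (fun _ _ _ => erefl) _ (leqnn _) s it).
  by rewrite anticomm_logrep andbF.
by move=> k /negbTE ki p; rewrite /= ki !andbF.
Qed.

Lemma mflip_meas d n (L : seq (seq (op n))) (u : 'I_(size L)) (i' : 'I_n) (s' : pos d) me :
  mflip L (inl (inr (u, i', s'))) me = (me == (nat_of_ord u, i', s')).
Proof. by case: me => [[t i] s]; rewrite /= !xpair_eqE (eq_sym t) (eq_sym i) (eq_sym s). Qed.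

Lemma meas_in_check d n (L : seq (seq (op n))) (u : 'I_(size L)) (i' : 'I_n) (s' : pos d) c :
  flips L (inl (inr (u, i', s'))) c -> (nat_of_ord u, i', s') \in check_meas L c.
Proof.
apply: contraLR => notin; rewrite flipsE big1_seq // => me /andP [_ me_in].
by rewrite mflip_meas; apply: contraNF notin => /eqP <-.
Qed.

Lemma meas_flip_cases d n (L : seq (seq (op n))) (u : 'I_(size L)) (i' : 'I_n) (s' : pos d)
    (t : 'I_(size L)) i s :
  initL L i <= t -> flips L (inl (inr (u, i', s'))) (t, i, s) ->
  (nat_of_ord u, i', s') = (nat_of_ord t, i, s) \/
  nat_of_ord t = u.+1 /\ (i', s') \in bpgen (nth [::] L t) i s.
Proof.
move=> it /meas_in_check; rewrite /= inE => /orP [/eqP -> | in_bp]; [by left | right].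
move: in_bp; case: ifP => // t_init /mapP [[j s''] js_in [ut -> ->]].
by split; [lia | ].
Qed.

Definition fwdgen_of d n (og : option (gate n)) (i : 'I_n) (s : pos d) : seq ('I_n * pos d) :=
  match og with
  | Some (GH _) => [:: (i, refl s)]
  | Some (GS _) => if isZs s then [:: (i, s); (i, refl s)] else [:: (i, s)]
  | Some (GCNOT c tg) =>
      if ((i == c) && isZs s) || ((i == tg) && isXs s) then [:: (c, s); (tg, s)]
      else [:: (i, s)]
  | _ => [:: (i, s)]
  end.

Lemma size_fwdgen_of d n (og : option (gate n)) i (s : pos d) : size (fwdgen_of og i s) <= 2.
Proof. by case: og => [[]|] //= *; case: ifP. Qed.

Lemma fwdgen_of_supp d n (g : gate n) i (s : pos d) x :
  i \in supp_gate g -> x \in fwdgen_of (Some g) i s -> x.1 \in supp_gate g.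
Proof.
case: g => [i0 y z|i0|i0|c t] /=; rewrite ?inE.
- by move=> /eqP -> /eqP ->.
- by move=> /eqP -> /eqP ->.
- move=> /eqP ->; case: ifP => _; rewrite ?inE; first case/orP; by move=> /eqP ->.
- move=> ict; case: ifP => _; rewrite ?inE; first case/orP;
    by move=> /eqP -> //=; rewrite eqxx ?orbT.
Qed.

Lemma mem_bpgen_of d n (g : gate n) (i j : 'I_n) (s s'' : pos d) :
  j \in supp_gate g -> uniq (supp_gate g) -> (i, s) \in bpgen_of (Some g) j s'' ->
  i \in supp_gate g /\ (j, s'') \in fwdgen_of (Some g) i s.
Proof.
case: g => [i0 y z|i0|i0|c t] /= jg.
- by move=> _; rewrite inE => /eqP [-> ->]; rewrite jg mem_head.
- by move=> _; rewrite inE => /eqP [-> ->]; rewrite jg refl_inv mem_head.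
- move=> _; rewrite inE in jg; case: ifP => s''X; rewrite !inE; first case/orP;
    move=> /eqP [-> ->]; split=> //; rewrite ?isZs_refl ?s''X ?refl_inv /=;
    by [rewrite !inE eqxx ?orbT | case: ifP; rewrite !inE eqxx].
- rewrite !inE andbT => ct; have tc : (t == c) = false by rewrite eq_sym (negbTE ct).
  move: jg; rewrite !inE => /orP [] /eqP ->; case: ifP => cond; rewrite !inE; try case/orP.
  all: move=> /eqP [-> ->]; move: cond; rewrite ?eqxx ?orbT ?tc ?(negbTE ct) /=.
  all: by case: (isZs s''); case: (isXs s''); rewrite /= ?inE ?eqxx ?orbT.
Qed.

Lemma mem_bpgen d n (ly : seq (op n)) (i j : 'I_n) (s s'' : pos d) :
  layer_ok ly -> (i, s) \in bpgen ly j s'' -> (j, s'') \in fwdgen_of (gate_at ly i) i s.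
Proof.
move=> okly; rewrite bpgenE; case gj: (gate_at ly j) => [g|]; last first.
  by rewrite inE => /eqP [-> ->]; rewrite gj inE.
have [jg _] := gate_at_supp gj.
move=> /(mem_bpgen_of jg (uniq_supp_gate_at okly gj)) [ig fw].
by rewrite (gate_at_shared okly gj ig).
Qed.

Lemma stab_isZs d (s : pos d) : isXs s || isZs s -> isZs s = ~~ isXs s.
Proof. by rewrite /isXs /isZs; case: (odd s.1); case: (odd s.2). Qed.

Lemma comp_lconj_fwdgen d n (g : gate n) (P : lpauli n) i (s : pos d) :
  i \in supp_gate g -> uniq (supp_gate g) -> isXs s || isZs s ->
  comp (isXs s) i (lconj g P) =
  \big[addb/false]_(x <- fwdgen_of (Some g) i s) comp (isXs x.2) x.1 P.
Proof.
move=> ig ug /stab_isZs sZ; case: g ig ug => [i0 y z|i0|i0|c t] /=.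
- by rewrite big_seq1.
- by rewrite inE => /eqP -> _; rewrite big_seq1 isXs_refl sZ /comp /= eqxx; case: (isXs s).
- rewrite inE => /eqP -> _; rewrite sZ /comp /= eqxx.
  by case sX: (isXs s); rewrite /= !big_cons big_nil /= ?isXs_refl ?sZ ?sX /= ?addbF.
- rewrite !inE andbT => ict ct; have tc : (t == c) = false by rewrite eq_sym (negbTE ct).
  rewrite sZ /comp; case/orP: ict => /eqP ->; case sX: (isXs s);
    rewrite /= ?eqxx ?tc ?(negbTE ct) /= !big_cons big_nil /= ?sX ?addbF //.
  by rewrite addbC.
Qed.

Lemma bp_S n (L : seq (seq (op n))) lo hi (P : lpauli n) :
  lo <= hi -> bp L lo hi P = layer_lconj (nth [::] L lo) (bp L lo.+1 hi P).
Proof.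
move=> le; rewrite /bp (_ : hi.+1 - lo = (hi.+1 - lo.+1).+1); last by lia.
by rewrite /= rev_cons -cats1 foldl_cat.
Qed.

Lemma bp_nil n (L : seq (seq (op n))) lo (P : lpauli n) : bp L lo.+1 lo P = P.
Proof. by rewrite /bp subnn. Qed.

Lemma comp_obs n (b : bool) (k : 'I_n) q bx : comp b k (obs n q bx) = (b == bx) && (k == q :> nat).
Proof. by case: b; case: bx. Qed.

Lemma comp_Pbar n (L : seq (seq (op n))) (v : 'cV['F_2]_(nmeas L)) t b (k : 'I_n) :
  comp b k (Pbar L v t) =
  \big[addb/false]_(j < nmeas L | v j ord0 != 0%R)
     (let: (q, bx, tj) := mnth L j in (t < tj) && comp b k (bp L t.+1 tj (obs n q bx))).
Proof. by case: b. Qed.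

Lemma mnth_measured n (L : seq (seq (op n))) j q bx tj :
  j < nmeas L -> mnth L j = (q, bx, tj) -> has (fun o => meas_of o == Some (q, bx)) (nth [::] L tj).
Proof.
move=> jL mj; have := mem_nth (0, false, 0) jL; rewrite -/(mnth L j) mj.
case/flattenP=> _ /mapP [t _ ->] /mapP [[q' b'] qb_in [-> -> ->]].
elim: (nth [::] L t) qb_in => //= o ly IH; case: (meas_of o) => [qb|] /=.
  by rewrite inE => /orP [/eqP -> | /IH ->]; rewrite ?eqxx ?orbT.
by move/IH ->.
Qed.

Lemma meas_of_is_meas n (o : op n) q bx (k : 'I_n) :
  meas_of o = Some (q, bx) -> is_meas_of k o = (k == q :> nat).
Proof. by case: o => //= i b [<- _]; rewrite eq_sym. Qed.

Lemma comp_Pbar_fwdgen d n (L : seq (seq (op n))) (v : 'cV['F_2]_(nmeas L)) u g i (s : pos d) :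
  well_formed L -> gate_at (nth [::] L u.+1) i = Some g -> isXs s || isZs s ->
  comp (isXs s) i (Pbar L v u) =
  \big[addb/false]_(x <- fwdgen_of (Some g) i s) comp (isXs x.2) x.1 (Pbar L v u.+1).
Proof.
move=> wfL gi stab.
have okly : layer_ok (nth [::] L u.+1).
  by apply: wf_layer wfL _; case: ltnP gi => // uL; rewrite nth_default.
have [ig _] := gate_at_supp gi; have ug := uniq_supp_gate_at okly gi.
have layer_comp b k P : gate_at (nth [::] L u.+1) k = Some g ->
    comp b k (layer_lconj (nth [::] L u.+1) P) = comp b k (lconj g P).
  by move=> gk; rewrite (comp_agree _ (layer_lconj_at P k okly)) gk.
rewrite comp_Pbar (eq_bigr _ (fun x _ => comp_Pbar _ _ _ _)) exchange_big.
apply: eq_bigr => j _; case mj: (mnth L j) => [[q bx] tj].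
case: (ltngtP tj u.+1) => [tj_lt|tj_gt|tj_eq].
- by rewrite big1 // => x _; rewrite ltnNge (ltnW tj_lt).
- by rewrite bp_S ?(ltnW tj_gt) // layer_comp // comp_lconj_fwdgen.
- rewrite big1 // tj_eq bp_S // bp_nil layer_comp // comp_lconj_fwdgen //.
  rewrite big1_seq // => x /andP [_ x_fw].
  have xg := fwdgen_of_supp ig x_fw.
  have unmeasured := gate_at_unmeasured okly (gate_at_shared okly gi xg).
  rewrite comp_obs; apply: contraNF unmeasured => /andP [_ xq].
  move: (mnth_measured (ltn_ord j) mj); rewrite tj_eq; apply: sub_has => o /eqP mo.
  by rewrite (meas_of_is_meas _ mo).
Qed.

Lemma card_le_cover (T : finType) (U : eqType) (A : {pred T}) (f : T -> U) (s : seq U) :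
  {in A &, injective f} -> {in A, forall x, f x \in s} -> #|A| <= size s.
Proof.
move=> f_inj fA; rewrite cardE -(size_map f); apply: uniq_leq_size.
  by rewrite map_inj_in_uniq ?enum_uniq // => x y; rewrite !mem_enum; apply: f_inj.
by move=> _ /mapP [x xA ->]; apply: fA; rewrite -mem_enum.
Qed.

Lemma card_le2_cover3 (T : finType) (U : eqType) (A : {pred T}) (f : T -> U) (h : pred U)
    (a b c : U) :
  {in A &, injective f} -> {in A, forall x, f x \in [:: a; b; c]} ->
  {in A, forall x, h (f x)} -> ~~ [&& h a, h b & h c] -> #|A| <= 2.
Proof.
move=> f_inj cover hA not_all.
apply: leq_trans (card_le_cover (s := [seq y <- [:: a; b; c] | h y]) f_inj _) _.
  by move=> x xA; rewrite mem_filter hA ?cover.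
by move: not_all; rewrite size_filter /=; case: (h a); case: (h b); case: (h c).
Qed.

Definition chk_coord d n T (c : chk d n T) : nat * 'I_n * pos d := (nat_of_ord c.1.1, c.1.2, c.2).

Lemma chk_coord_inj d n T : injective (@chk_coord d n T).
Proof. by move=> [[t i] s] [[t' i'] s'] [/ord_inj -> -> ->]. Qed.

Definition Pbar_at d n (L : seq (seq (op n))) (v : 'cV['F_2]_(nmeas L))
    (c : nat * 'I_n * pos d) : bool :=
  let: (t, i, s) := c in comp (isXs s) i (Pbar L v t).
Arguments Pbar_at {d n} L v c.

Lemma included_Pbar_at d n (L : seq (seq (op n))) v (c : chk d n (size L)) :
  included L v c -> Pbar_at L v (chk_coord c).
Proof. by case: c => [[t i] s] /andP [_]. Qed.

Lemma included_init d n (L : seq (seq (op n))) v (t : 'I_(size L)) i (s : pos d) :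
  included L v (t, i, s) -> initL L i <= t.
Proof. by case/andP => /andP [/andP [/andP [] ]]. Qed.

Lemma detects_adj_side_inj d bx (s s' q : pos d) :
  detects bx s -> detects bx s' -> adj s q -> adj s' q ->
  (s.1 + s.2 < q.1 + q.2) = (s'.1 + s'.2 < q.1 + q.2) -> s = s'.
Proof.
case: s s' q => [s1 s2] [t1 t2] [q1 q2]; rewrite /detects /isZs /isXs /adj /=.
by case: bx => *; congr pair; apply: ord_inj; lia.
Qed.

Lemma adj_dir_inj d (s q q' : pos d) :
  adj s q -> adj s q' -> (q.1 == s.1 :> nat) = (q'.1 == s.1 :> nat) ->
  (s.1 + s.2 < q.1 + q.2) = (s.1 + s.2 < q'.1 + q'.2) -> q = q'.
Proof.
case: s q q' => [s1 s2] [q1 q2] [r1 r2]; rewrite /adj /= => *.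
by congr pair; apply: ord_inj; lia.
Qed.

Lemma data_edge_deg d n (L : seq (seq (op n))) v (u : 'I_(size L)) i' (q : pos d) bx :
  well_formed L -> active L i' u ->
  #|[set c | included L v c && flips L (inl (inl (u, i', q, bx))) c]| <= 2.
Proof.
move=> wfL act; rewrite -[2]card_bool.
apply: (@leq_card_in _ _ (fun c : chk d n (size L) => c.2.1 + c.2.2 < q.1 + q.2)).
move=> [[t i] s] [[t' i''] s']; rewrite !inE => /andP [inc fl] /andP [inc' fl'] /= side.
move: fl fl'; rewrite (flips_data _ _ _ wfL act (included_init inc)).
rewrite (flips_data _ _ _ wfL act (included_init inc')).
move=> /and4P [/eqP ut /eqP -> det adj_q] /and4P [/eqP ut' /eqP -> det' adj_q'].
by rewrite (detects_adj_side_inj det det' adj_q adj_q' side) (ord_inj (etrans (esym ut) ut')).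
Qed.

Lemma meas_edge_deg d n (L : seq (seq (op n))) v (u : 'I_(size L)) i' (s' : pos d) :
  well_formed L -> isXs s' || isZs s' ->
  #|[set c | included L v c && flips L (inl (inr (u, i', s'))) c]| <= 2.
Proof.
move=> wfL stab; set X := [set c | _].
have inj : {in X &, injective (@chk_coord d n (size L))} by move=> ? ? _ _; apply: chk_coord_inj.
have holds : {in X, forall c, Pbar_at L v (chk_coord c)}.
  by move=> c; rewrite inE => /andP [/included_Pbar_at].
have cover : {in X, forall c, chk_coord c \in
    (nat_of_ord u, i', s') ::
    [seq (u.+1, x.1, x.2) | x <- fwdgen_of (gate_at (nth [::] L u.+1) i') i' s']}.
  move=> [[t i] s]; rewrite inE /chk_coord /= => /andP [inc fl].
  case: (meas_flip_cases (included_init inc) fl) => [<-|[tu bp]]; first exact: mem_head.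
  rewrite inE; apply/orP; right; apply/mapP; exists (i, s); last by rewrite /= tu.
  by rewrite -tu; apply: mem_bpgen bp; apply: wf_layer wfL _.
move: cover; have := size_fwdgen_of (gate_at (nth [::] L u.+1) i') i' s'.
case fwE: fwdgen_of => [|x1 [|x2 [|? ?]]] // _ cover;
  try by apply: leq_trans (card_le_cover inj cover) _.
case gi: (gate_at (nth [::] L u.+1) i') fwE => [g|]; last by [].
move=> fwE; apply: card_le2_cover3 inj cover holds _.
have := comp_Pbar_fwdgen v wfL gi stab; rewrite fwE big_cons big_seq1 /Pbar_at /= => ->.
by case: (comp _ _ _); case: (comp _ _ _).
Qed.

Lemma magic_edge_deg d n (L : seq (seq (op n))) v (i' : 'I_n) bx :
  well_formed L ->
  #|[set c : chk d n (size L) | included L v c && flips L (inr (i', bx)) c]| = 0.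
Proof.
move=> wfL; apply: eq_card0 => -[[t i] s]; rewrite !inE.
by case inc: (included _ _ _); rewrite // (flips_magic _ _ _ wfL (included_init inc)).
Qed.

Lemma size_check_meas d n (L : seq (seq (op n))) (c : chk d n (size L)) :
  size (check_meas L c) <= 3.
Proof.
case: c => [[t i] s] /=; case: ifP => //= _; rewrite size_map bpgenE.
by case: (gate_at _ i) => [[]|] //= *; case: ifP.
Qed.

Lemma vertex_deg d n (L : seq (seq (op n))) v (c : chk d n (size L)) :
  well_formed L -> included L v c -> #|[set e | is_err L e && flips L e c]| <= 11.
Proof.
case: c => [[t i] s] wfL inc; have it := included_init inc.
(* A data error seen by the check sits on a neighbour of [s], determined by its direction from
   [s]; a measurement error flips one of the outcomes multiplied by the check. *)
pose key (e : err d n (size L)) : (bool * bool * bool) + (nat * 'I_n * pos d) :=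
  match e with
  | inl (inl (_, _, q, bx)) => inl (q.1 == s.1 :> nat, s.1 + s.2 < q.1 + q.2, bx)
  | inl (inr (u, i', s')) => inr (nat_of_ord u, i', s')
  | inr (i', _) => inr (0, i', s)
  end.
pose cands := [seq inl k | k <- enum {: bool * bool * bool}] ++
              [seq inr m | m <- check_meas L (t, i, s)].
have size_cands : size cands <= 11.
  rewrite size_cat !size_map -enumT -cardT !card_prod !card_bool.
  by have := size_check_meas (t, i, s).
apply: leq_trans (card_le_cover (f := key) (s := cands) _ _) size_cands.
  move=> e1 e2; rewrite !inE => /andP [err1 fl1] /andP [err2 fl2].
  case: e1 err1 fl1 => [[[[[u1 i1] q1] b1]|[[u1 i1] s1]]|[i1 b1]] err1 fl1;
  case: e2 err2 fl2 => [[[[[u2 i2] q2] b2]|[[u2 i2] s2]]|[i2 b2]] err2 fl2 //=;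
    rewrite ?(flips_magic _ _ _ wfL it) // in fl1 fl2.
  - case/andP: err1 => act1 _; case/andP: err2 => act2 _.
    move: fl1 fl2; rewrite (flips_data _ _ _ wfL act1 it) (flips_data _ _ _ wfL act2 it).
    move=> /and4P [/eqP ut1 /eqP it1 _ adj1] /and4P [/eqP ut2 /eqP it2 _ adj2] [dir side ->].
    by rewrite (adj_dir_inj adj1 adj2 dir side) (ord_inj (etrans ut1 (esym ut2))) -it1 -it2.
  - by case=> /ord_inj -> -> ->.
move=> [[[[[u i'] q] bx]|[[u i'] s']]|[i' bx]]; rewrite inE => /andP [_ fl] /=.
- by rewrite mem_cat map_f ?mem_enum.
- by rewrite mem_cat orbC map_f ?meas_in_check.
- by rewrite (flips_magic _ _ _ wfL it) in fl.
Qed.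

Theorem lemma4 :
  exists C : nat,
  forall (d n : nat) (L : seq (seq (op n))), well_formed L ->
  forall v : 'cV['F_2]_(nmeas L), reliable L v ->
    (forall e : err d n (size L), is_err L e ->
       #|[set c : chk d n (size L) | included L v c && flips L e c]| <= 2) /\
    (forall c : chk d n (size L), included L v c ->
       #|[set e : err d n (size L) | is_err L e && flips L e c]| <= C).
Proof.
exists 11 => d n L wfL v _; split=> [|c inc]; last exact: vertex_deg wfL inc.
case=> [[[[[u i'] q] bx]|[[u i'] s']]|[i' bx]] /= is_e.
- by case/andP: is_e => act _; apply: data_edge_deg.
- by case/andP: is_e => _ stab; apply: meas_edge_deg.
- by rewrite magic_edge_deg.
Qed.
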